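(* For integers $M,N,m,l,r$ with $1\leq m\leq l<N$, $M-m\geq N-l\geq 1$ and $0\leq r\leq M-N+2l-2m+2$, the polynomial \[ {M\brack m}{N\brack l}-q^{r}{M\brack m-1}{N\brack l+1} \] has nonnegative coefficients as a polynomial in $q$.
   Context: ${n\brack m}=\prod_{i=0}^{m-1}\frac{1-q^{n-i}}{1-q^{m-i}}$ denotes the Gaussian polynomial ($q$-binomial coefficient) for integers $n\ge m\ge0$. *)

From mathcomp Require Import all_boot all_order all_algebra.
Set Implicit Arguments. Unset Strict Implicit. Unset Printing Implicit Defensive.
Import GRing.Theory Num.Theory.
Local Open Scope ring_scope.

(* Gaussian polynomial [n brack m] = prod_{i<m} (1 - q^(n-i)) / (1 - q^(m-i)),
   as a polynomial in q = 'X with rational coefficients (the quotient is exact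
   for n >= m >= 0; field polynomial division is used). *)
Definition gauss (n m : nat) : {poly rat} :=
  (\prod_(i < m) (1 - 'X^(n - i))) %/ (\prod_(i < m) (1 - 'X^(m - i))).

(* Write [k+w brack k] as qbinom k w, so the claim becomes nonnegativity of
     qbinom (m+1) a * qbinom l (b+1) - q^r * qbinom m (a+1) * qbinom (l+1) b
   for m <= l, b <= a and r <= (l - m) + (a - b).  If b < a, one of the two Pascal rules applied to both
   qbinom (m+1) a and qbinom m (a+1) writes the difference as a difference of
   the same shape with smaller indices plus q^j times another such difference
   (for r > 0 the rule with weight q^(m+1), one power of q being absorbed into
   q^r; for r = 0 the rule with weight q^(a+1)).  If a = b but m < l, the
   symmetry qbinom k w = qbinom w k exchanges the roles of (m, l) and (b, a).
   If m = l and a = b, then r = 0 and the difference vanishes. *)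

From mathcomp Require Import all_boot all_order all_algebra.
From mathcomp Require Import ring zify.
Import GRing.Theory Num.Theory.
Local Open Scope ring_scope.

Section QBinomial.

Variable R : comNzRingType.

Fixpoint qbinom (k : nat) : nat -> {poly R} :=
  match k with
  | 0 => fun _ => 1
  | k.+1 => fix qbinomk (w : nat) : {poly R} :=
      if w is w.+1 then qbinom k w.+1 + 'X^(k.+1) * qbinomk w else 1
  end.

Lemma qbinom0n w : qbinom 0 w = 1. Proof. by []. Qed.

Lemma qbinomn0 k : qbinom k 0 = 1. Proof. by case: k. Qed.

Lemma qbinomS k w :
  qbinom k.+1 w.+1 = qbinom k w.+1 + 'X^(k.+1) * qbinom k.+1 w.
Proof. by []. Qed.

Fixpoint qpoch (a n : nat) : {poly R} :=
  if n is n.+1 then qpoch a n * (1 - 'X^(a + n.+1)) else 1.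

Lemma qpochS a n : qpoch a n.+1 = qpoch a n * (1 - 'X^(a + n.+1)).
Proof. by []. Qed.

Lemma qpochSl a n : qpoch a n.+1 = (1 - 'X^(a.+1)) * qpoch a.+1 n.
Proof.
elim: n => [|n IHn]; first by rewrite qpochS /= addn1 mul1r mulr1.
by rewrite qpochS IHn qpochS -mulrA addSnnS.
Qed.

Lemma big_qpoch w m :
  \prod_(i < m) (1 - 'X^(m + w - i)) = qpoch w m.
Proof.
elim: m => [|m IHm]; first by rewrite big_ord0.
rewrite big_ord_recl /=.
under eq_bigr => i _ do rewrite addSn subSS.
by rewrite IHm subn0 addnC mulrC.
Qed.

Lemma qbinom_qpoch k w : qbinom k w * qpoch 0 k = qpoch w k.
Proof.
elim: k w => [|k IHk] w; first by rewrite qbinom0n mulr1.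
elim: w => [|w IHw]; first by rewrite qbinomn0 mul1r.
have qpochSw : qbinom k.+1 w * (qpoch 0 k * (1 - 'X^(k.+1)))
               = (1 - 'X^(w.+1)) * qpoch w.+1 k.
  by rewrite -qpochSl -IHw /= add0n.
rewrite qbinomS [qpoch 0 k.+1]/= add0n mulrDl -mulrA qpochSw mulrA IHk.
by rewrite [qpoch w.+1 k.+1]/= exprD; ring.
Qed.

End QBinomial.

Section QBinomialIdomain.

Variable R : idomainType.

Lemma qpoch0_neq0 k : qpoch R 0 k != 0.
Proof.
elim: k => [|k IHk] /=; first exact: oner_neq0.
rewrite mulf_neq0 // add0n subr_eq0 eq_sym; apply/negP => /eqP eqXn1.
by have := congr1 (fun p : {poly R} => size p) eqXn1; rewrite size_polyXn size_poly1.
Qed.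

Lemma qbinomSr k w :
  qbinom R k.+1 w.+1 = qbinom R k.+1 w + 'X^(w.+1) * qbinom R k w.+1.
Proof.
apply: (mulIf (qpoch0_neq0 k.+1)).
rewrite qbinom_qpoch mulrDl qbinom_qpoch -mulrA.
have -> : qbinom R k w.+1 * qpoch R 0 k.+1 = qpoch R w.+1 k * (1 - 'X^(k.+1)).
  by rewrite [qpoch R 0 k.+1]/= add0n mulrA qbinom_qpoch.
by rewrite [qpoch R w k.+1]qpochSl qpochS exprD; ring.
Qed.

Lemma qbinomC k w : qbinom R k w = qbinom R w k.
Proof.
elim: k w => [|k IHk]; first by case.
elim=> [|w IHw] //.
by rewrite qbinomS qbinomSr IHk IHw.
Qed.

End QBinomialIdomain.

Section NonnegCoefs.

Variable R : numDomainType.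

Definition nonneg_coefs (p : {poly R}) := forall i, 0 <= p`_i.

Lemma nonneg_coefs0 : nonneg_coefs 0.
Proof. by move=> i; rewrite coef0. Qed.

Lemma nonneg_coefs1 : nonneg_coefs 1.
Proof. by move=> i; rewrite coef1 ler0n. Qed.

Lemma nonneg_coefsD p q :
  nonneg_coefs p -> nonneg_coefs q -> nonneg_coefs (p + q).
Proof. by move=> p_ge0 q_ge0 i; rewrite coefD addr_ge0. Qed.

Lemma nonneg_coefsXnM n p : nonneg_coefs p -> nonneg_coefs ('X^n * p).
Proof. by move=> p_ge0 i; rewrite coefXnM; case: ltnP. Qed.

Lemma qbinom_nonneg k w : nonneg_coefs (qbinom R k w).
Proof.
elim: k w => [|k IHk] w; first exact: nonneg_coefs1.
elim: w => [|w IHw]; first exact: nonneg_coefs1.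
by rewrite qbinomS; apply: nonneg_coefsD => //; apply: nonneg_coefsXnM.
Qed.

Definition qbinom_cross (m a l b r : nat) : {poly R} :=
  qbinom R m.+1 a * qbinom R l b.+1 - 'X^r * qbinom R m a.+1 * qbinom R l.+1 b.

Lemma qbinom_crossC m a l b r : qbinom_cross m a l b r = qbinom_cross b l a m r.
Proof.
by rewrite /qbinom_cross (qbinomC _ m.+1) (qbinomC _ l) (qbinomC _ m)
  (qbinomC _ l.+1); ring.
Qed.

Lemma qbinom_cross_diag m a : qbinom_cross m a m a 0 = 0.
Proof. by rewrite /qbinom_cross expr0; ring. Qed.

Lemma qbinom_cross_nonneg_step m a l b r :
  (forall m' a' r', (m' + a' < m + a.+1)%N -> (m' <= l)%N -> (b <= a')%N ->
     (r' <= l - m' + (a' - b))%N -> nonneg_coefs (qbinom_cross m' a' l b r')) ->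
  (m <= l)%N -> (b <= a)%N -> (r <= l - m + (a.+1 - b))%N ->
  nonneg_coefs (qbinom_cross m a.+1 l b r).
Proof.
move=> IH ml ba rle.
case: r rle => [|r] rle; case: m IH ml rle => [|m] IH ml rle.
- have -> : qbinom_cross 0 a.+1 l b 0
            = qbinom_cross 0 a l b 0 + 'X^(a.+1) * qbinom R l b.+1.
    by rewrite /qbinom_cross [qbinom _ 1 a.+1]qbinomSr !qbinom0n; ring.
  by apply: nonneg_coefsD; [apply: IH; lia | apply/nonneg_coefsXnM/qbinom_nonneg].
- have -> : qbinom_cross m.+1 a.+1 l b 0
            = qbinom_cross m.+1 a l b 0 + 'X^(a.+1) * qbinom_cross m a.+1 l b 1.
    by rewrite /qbinom_cross [qbinom _ m.+2 a.+1]qbinomSr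
      [qbinom _ m.+1 a.+2]qbinomSr !exprS expr0; ring.
  by apply: nonneg_coefsD; [|apply: nonneg_coefsXnM]; apply: IH; lia.
- have -> : qbinom_cross 0 a.+1 l b r.+1
            = qbinom R l b.+1 + 'X^1 * qbinom_cross 0 a l b r.
    by rewrite /qbinom_cross [qbinom _ 1 a.+1]qbinomS !qbinom0n !exprS !expr0; ring.
  by apply: nonneg_coefsD; [apply: qbinom_nonneg | apply/nonneg_coefsXnM/IH; lia].
- have -> : qbinom_cross m.+1 a.+1 l b r.+1
            = qbinom_cross m a.+1 l b r.+1 + 'X^(m.+2) * qbinom_cross m.+1 a l b r.
    by rewrite /qbinom_cross [qbinom _ m.+2 a.+1]qbinomS
      [qbinom _ m.+1 a.+2]qbinomS !exprS; ring.
  by apply: nonneg_coefsD; [|apply: nonneg_coefsXnM]; apply: IH; lia.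
Qed.

Lemma qbinom_cross_nonneg m a l b r :
  (m <= l)%N -> (b <= a)%N -> (r <= l - m + (a - b))%N ->
  nonneg_coefs (qbinom_cross m a l b r).
Proof.
have [n] := ubnP (m + a + l + b); elim: n => // n IHn in m a l b r *.
move=> size_lt ml ba rle.
have step : forall m a l b r, (m + a + l + b < n.+1)%N ->
    (m <= l)%N -> (b < a)%N -> (r <= l - m + (a - b))%N ->
    nonneg_coefs (qbinom_cross m a l b r).
  move=> {size_lt ml ba rle} m1 [|a1] l1 b1 r1 // lt_n *.
  by apply: qbinom_cross_nonneg_step => // m' a' r' *; apply: IHn; lia.
have [lt_ba|ab] := ltnP b a; first exact: step.
have [lt_ml|lm] := ltnP m l.
  by rewrite qbinom_crossC; apply: step; lia.
have [-> -> ->] : [/\ l = m, b = a & r = 0%N] by split; lia.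
by rewrite qbinom_cross_diag; apply: nonneg_coefs0.
Qed.

End NonnegCoefs.

Lemma gauss_qbinom m w : gauss (m + w) m = qbinom rat m w.
Proof.
rewrite /gauss big_qpoch.
have := big_qpoch rat 0 m; rewrite addn0 => ->.
by rewrite -qbinom_qpoch mulpK // qpoch0_neq0.
Qed.

Theorem lemma3p2 (M N m l r : nat) :
  (1 <= m)%N -> (m <= l)%N -> (l < N)%N ->
  (N - l <= M - m)%N ->
  (r + N + 2 * m <= M + 2 * l + 2)%N ->
  forall i : nat,
    0 <= (gauss M m * gauss N l - 'X^r * gauss M m.-1 * gauss N l.+1)`_i.
Proof.
case: m => [|m] // _ ml lN NlMm rle.
have -> : gauss M m.+1 = qbinom rat m.+1 (M - m.+1).
  by rewrite -gauss_qbinom; congr gauss; lia.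
have -> : gauss M m.+1.-1 = qbinom rat m (M - m.+1).+1.
  by rewrite -gauss_qbinom; congr gauss; lia.
have -> : gauss N l = qbinom rat l (N - l).-1.+1.
  by rewrite -gauss_qbinom; congr gauss; lia.
have -> : gauss N l.+1 = qbinom rat l.+1 (N - l).-1.
  by rewrite -gauss_qbinom; congr gauss; lia.
apply: (qbinom_cross_nonneg rat m (M - m.+1) l (N - l).-1 r); lia.
Qed.
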